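(* Let $D$ be a finite oriented graph and let $\delta$ be a density function of $D$. Then the subgraph of $D$ induced by the support of $\delta$ is an orientation of a blow-up of $K_k$, for some $k\geq 2$, such that the sum of $\delta(u)$ over all copies $u$ of the same vertex of $K_k$ equals $1/k$.
   Context: An oriented graph is a digraph $(V,E)$, $E\subseteq V^2$, that is irreflexive with antisymmetric edge relation. A density function of a finite digraph $D$ is a probability distribution $\delta\colon V(D)\to[0,1]$ (with $\sum_v\delta(v)=1$) maximizing $\sum_{(u,v)\in E(D)}\delta(u)\delta(v)$; its support is $\{v:\delta(v)>0\}$. A blow-up of $K_k$ is obtained from $K_k$ by replacing each vertex $u$ by a non-empty set of copies of $u$, each copy having the same neighbours as $u$ and no edges among copies of the same vertex. An orientation of an undirected graph $G$ is a digraph having, for each edge $\{x,y\}$ of $G$, exactly one of $(x,y),(y,x)$ as an edge, and no other edges. *)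

From mathcomp Require Import all_boot all_order all_algebra.
Set Implicit Arguments. Unset Strict Implicit. Unset Printing Implicit Defensive.
Import Order.TTheory GRing.Theory Num.Theory.
Local Open Scope ring_scope.

(* A finite digraph is a finType V with an edge relation E : rel V
   ((u,v) is an edge iff E u v). *)

Definition oriented (V : finType) (E : rel V) : Prop :=
  irreflexive E /\ (forall x y : V, E x y -> ~~ E y x).

Definition prob_distr (R : realFieldType) (V : finType) (d : V -> R) : Prop :=
  (forall v, 0 <= d v) /\ \sum_(v : V) d v = 1.

Definition edge_density (R : realFieldType) (V : finType) (E : rel V)
    (d : V -> R) : R :=
  \sum_(u : V) \sum_(v : V | E u v) d u * d v.

Definition density_function (R : realFieldType) (V : finType) (E : rel V)
    (d : V -> R) : Prop :=
  prob_distr d /\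
  (forall d' : V -> R, prob_distr d' -> edge_density E d' <= edge_density E d).

Definition supp (R : realFieldType) (V : finType) (d : V -> R) : {set V} :=
  [set v | d v > 0].

(* The subgraph of (V,E) induced by S is an orientation of a blow-up of K_k,
   with f assigning to each vertex of S the vertex of K_k it is a copy of:
   every vertex of K_k has at least one copy in S; copies of the same vertex
   are non-adjacent; copies of distinct vertices are joined by exactly one of
   the two arcs. *)
Definition orient_blowup_K (V : finType) (E : rel V) (S : {set V}) (k : nat)
    (f : V -> 'I_k) : Prop :=
  (forall i : 'I_k, exists2 v, v \in S & f v = i) /\
  (forall u v, u \in S -> v \in S ->
     (f u = f v -> ~~ E u v) /\ (f u <> f v -> E u v (+) E v u)).

From mathcomp Require Import all_boot all_order all_algebra.
From mathcomp Require Import ring lra zify.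
Set Implicit Arguments. Unset Strict Implicit. Unset Printing Implicit Defensive.
Import Order.TTheory GRing.Theory Num.Theory.
Local Open Scope ring_scope.

(* A density function d maximizes B(x, x) on the simplex, where B is the bilinear
   form B(x, y) = sum over arcs (u, v) of x u * y v. Moving mass from v to u shows
   g u <= g v whenever d v > 0, so the gradient g u = sum_(x adjacent to u) d x
   is constant on the support.
   For u, v, w in the support with v adjacent to neither u nor w, the direction
   delta_u + delta_w - 2 delta_v has zero first-order term and second-order term
   equal to the number of arcs between u and w, which must therefore vanish: so
   non-adjacency is an equivalence relation on the support, whose k classes are
   the copies of the vertices of K_k. The class of u weighs 1 - g u, the same for
   all classes, hence 1/k. Finally k >= 2, since a single arc already yields
   density 1/4 whereas a single class spans no arc. *)

Section EdgeForm.
Variables (R : realFieldType) (V : finType) (E : rel V).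

Definition edge_form (x y : V -> R) : R := \sum_u \sum_(v | E u v) x u * y v.

Definition delta (a : V) : {ffun V -> R^o} := [ffun x => (x == a)%:R].

Lemma edge_formDl (x y : {ffun V -> R^o}) z :
  edge_form (x + y) z = edge_form x z + edge_form y z.
Proof.
rewrite /edge_form -big_split; apply: eq_bigr => u _.
by rewrite -big_split; apply: eq_bigr => v _; rewrite ffunE mulrDl.
Qed.

Lemma edge_formDr x (y z : {ffun V -> R^o}) :
  edge_form x (y + z) = edge_form x y + edge_form x z.
Proof.
rewrite /edge_form -big_split; apply: eq_bigr => u _.
by rewrite -big_split; apply: eq_bigr => v _; rewrite ffunE mulrDr.
Qed.

Lemma edge_formZl c (x : {ffun V -> R^o}) z :
  edge_form (c *: x) z = c * edge_form x z.
Proof.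
rewrite /edge_form mulr_sumr; apply: eq_bigr => u _.
by rewrite mulr_sumr; apply: eq_bigr => v _; rewrite ffunE mulrA.
Qed.

Lemma edge_formZr c x (y : {ffun V -> R^o}) :
  edge_form x (c *: y) = c * edge_form x y.
Proof.
rewrite /edge_form mulr_sumr; apply: eq_bigr => u _.
by rewrite mulr_sumr; apply: eq_bigr => v _; rewrite ffunE mulrCA.
Qed.

Lemma edge_formNl (x : {ffun V -> R^o}) z : edge_form (- x) z = - edge_form x z.
Proof. by rewrite -scaleN1r edge_formZl mulN1r. Qed.

Lemma edge_formNr x (y : {ffun V -> R^o}) : edge_form x (- y) = - edge_form x y.
Proof. by rewrite -scaleN1r edge_formZr mulN1r. Qed.

Lemma edge_form_deltal a y : edge_form (delta a) y = \sum_(v | E a v) y v.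
Proof.
rewrite /edge_form (bigD1 a) //= [X in _ + X]big1 ?addr0; last first.
  by move=> u /negbTE ua; apply: big1 => v _; rewrite ffunE ua mul0r.
by apply: eq_bigr => v _; rewrite ffunE eqxx mul1r.
Qed.

Lemma edge_form_deltar x b : edge_form x (delta b) = \sum_(u | E u b) x u.
Proof.
rewrite /edge_form [RHS]big_mkcond; apply: eq_bigr => u _.
rewrite big_mkcond (bigD1 b) //= [X in _ + X]big1 ?addr0; last first.
  by move=> v /negbTE vb; rewrite ffunE vb mulr0 if_same.
by rewrite ffunE eqxx mulr1.
Qed.

Lemma edge_form_delta a b : edge_form (delta a) (delta b) = (E a b)%:R.
Proof.
rewrite edge_form_deltal big_mkcond (bigD1 b) //= [X in _ + X]big1 ?addr0; last first.
  by move=> v /negbTE vb; rewrite ffunE vb if_same.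
by rewrite ffunE eqxx; case: (E a b).
Qed.

Lemma sum_indicator (a : V) : \sum_x ((x == a)%:R : R) = 1.
Proof. by rewrite (bigD1 a) //= eqxx big1 ?addr0 // => x /negbTE ->. Qed.

Lemma edge_form_shift (x y : V -> R) t :
  edge_form (fun v => x v + t * y v) (fun v => x v + t * y v) =
  edge_form x x + t * (edge_form x y + edge_form y x) + t ^+ 2 * edge_form y y.
Proof.
rewrite /edge_form mulrDr !mulr_sumr -!big_split; apply: eq_bigr => u _ /=.
by rewrite !mulr_sumr -!big_split; apply: eq_bigr => v _ /=; ring.
Qed.

End EdgeForm.

Section Support.
Variables (R : realFieldType) (V : finType) (d : V -> R).
Hypothesis d_ge0 : forall x, 0 <= d x.

Lemma notin_supp_eq0 x : x \notin supp d -> d x = 0.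
Proof. by rewrite inE lt_def negb_and negbK d_ge0 orbF => /eqP. Qed.

Lemma sum_supp (P : pred V) : \sum_(x in supp d | P x) d x = \sum_(x | P x) d x.
Proof.
rewrite [RHS](bigID (mem (supp d))) /= [X in _ + X]big1 ?addr0.
  by apply: eq_bigl => x; rewrite andbC.
by move=> x /andP[_ /notin_supp_eq0].
Qed.

Lemma supp_nonempty : \sum_x d x = 1 -> exists x, x \in supp d.
Proof.
move=> sum1; case: (set_0Vmem (supp d)) => [supp0|[x xS]]; last by exists x.
move: sum1; rewrite -(sum_supp predT) supp0 big_pred0 => [/esym/eqP|x].
  by rewrite oner_eq0.
by rewrite inE.
Qed.

End Support.

Lemma equivalence_classes_ordinal (T : finType) (r : rel T) (S : {set T}) x0 :
  x0 \in S -> {in S & &, equivalence_rel r} ->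
  exists k (f : T -> 'I_k),
    (forall i, exists2 x, x \in S & f x = i) /\ {in S &, forall x y, (f x == f y) = r x y}.
Proof.
move=> x0S r_equiv; pose P := equivalence_partition r S.
have /and3P[/eqP coverP trivP set0P] := equivalence_partitionP r_equiv.
have P_block x : x \in S -> pblock P x \in P by move=> xS; rewrite pblock_mem ?coverP.
have Px0 := P_block x0 x0S.
exists #|P|, (fun x => enum_rank_in Px0 (pblock P x)); split=> [i|x y xS yS].
  have iP := enum_valP i.
  have [B0|[x xB]] := set_0Vmem (enum_val i); first by move: set0P; rewrite -B0 iP.
  have xP : pblock P x = enum_val i by apply: def_pblock.
  exists x; last by rewrite xP enum_valK_in.
  by rewrite -coverP -mem_pblock xP.
rewrite (can_in_eq (enum_rankK_in Px0)) ?P_block // eq_pblock ?coverP //.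
exact: pblock_equivalence_partition.
Qed.

Section Adjacency.
Variables (V : finType) (E : rel V).

Definition adjacent u v := E u v || E v u.

Lemma orient_blowup_K_of_classes (S : {set V}) k (f : V -> 'I_k) :
  oriented E -> (forall i, exists2 v, v \in S & f v = i) ->
  {in S &, forall u v, (f u == f v) = ~~ adjacent u v} ->
  orient_blowup_K E S f.
Proof.
move=> [_ E_antisym] f_onto f_classes; split=> // u v uS vS.
have := f_classes u v uS vS; rewrite /adjacent => class_uv.
split=> [fuv|/eqP fuv]; first by move: class_uv; rewrite fuv eqxx negb_or => /esym/andP[].
move: class_uv; rewrite (negbTE fuv).
case Euv: (E u v); case Evu: (E v u) => //= _.
by have := E_antisym _ _ Euv; rewrite Evu.
Qed.

End Adjacency.

Section DensityFunction.
Variables (R : realFieldType) (V : finType) (E : rel V) (d : V -> R).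
Hypothesis dmax : density_function E d.

Let d_ge0 x : 0 <= d x. Proof. by case: dmax => [[]]. Qed.
Let d_sum1 : \sum_x d x = 1. Proof. by case: dmax => [[]]. Qed.

Lemma density_function_perturb (y : V -> R) t :
  \sum_x y x = 0 -> (forall x, 0 <= d x + t * y x) ->
  t * (edge_form E d y + edge_form E y d) + t ^+ 2 * edge_form E y y <= 0.
Proof.
move=> sum_y0 shift_ge0.
have shift_distr : prob_distr (fun x => d x + t * y x).
  by split=> //; rewrite big_split /= -mulr_sumr sum_y0 mulr0 addr0.
have := dmax.2 _ shift_distr.
rewrite /edge_density -/(edge_form E _ _) -/(edge_form E d d) edge_form_shift.
lra.
Qed.

Definition edge_density_grad u := edge_form E d (delta R u) + edge_form E (delta R u) d.

Lemma edge_density_grad_le u v : 0 < d v -> edge_density_grad u <= edge_density_grad v.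
Proof.
move=> dv_gt0; rewrite leNgt; apply/negP => grad_lt.
set gap := edge_density_grad u - edge_density_grad v.
have gap_gt0 : 0 < gap by rewrite subr_gt0.
pose y := delta R u - delta R v.
have sum_y0 : \sum_x y x = 0.
  by under eq_bigr do rewrite !ffunE; rewrite sumrB !sum_indicator subrr.
have lin_y : edge_form E d y + edge_form E y d = gap.
  by rewrite edge_formDr edge_formNr edge_formDl edge_formNl /gap /edge_density_grad; ring.
have quad_y : -2 <= edge_form E y y.
  rewrite edge_formDl edge_formNl !edge_formDr !edge_formNr !edge_form_delta.
  by case: (E u u); case: (E u v); case: (E v u); case: (E v v) => /=; lra.
pose t := Num.min (d v) (gap / 4).
have [t_le_dv t_le_gap] : t <= d v /\ t <= gap / 4 by split; rewrite ?ge_min ?lexx ?orbT.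
have t_gt0 : 0 < t by rewrite lt_min dv_gt0 divr_gt0.
have shift_ge0 x : 0 <= d x + t * y x.
  have := d_ge0 x; rewrite /y !ffunE.
  by case: (eqVneq x v) => [->|_]; case: (_ == u) => /=; nra.
have := density_function_perturb sum_y0 shift_ge0; rewrite lin_y; nra.
Qed.

Lemma edge_density_grad_supp u v :
  0 < d u -> 0 < d v -> edge_density_grad u = edge_density_grad v.
Proof. by move=> du dv; apply/eqP; rewrite eq_le !edge_density_grad_le. Qed.

Lemma edge_density_ge_quarter a b : E a b -> 4^-1 <= edge_density E d.
Proof.
move=> Eab; pose y := 2^-1 *: (delta R a + delta R b).
have y_distr : prob_distr y.
  split=> [x|]; first by rewrite !ffunE mulr_ge0 ?invr_ge0 ?addr_ge0 ?ler0n.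
  by under eq_bigr do rewrite !ffunE; rewrite -mulr_sumr big_split /= !sum_indicator; field.
apply: le_trans (dmax.2 _ y_distr).
rewrite /edge_density -/(edge_form E y y) edge_formZl edge_formZr.
rewrite !edge_formDl !edge_formDr !edge_form_delta Eab.
by case: (E a a); case: (E b a); case: (E b b) => /=; lra.
Qed.

Lemma edge_density_eq0 : {in supp d &, forall u v, ~~ E u v} -> edge_density E d = 0.
Proof.
move=> supp_indep; apply: big1 => u _; apply: big1 => v Euv.
have [uS|/(notin_supp_eq0 d_ge0)->] := boolP (u \in supp d); last by rewrite mul0r.
have [vS|/(notin_supp_eq0 d_ge0)->] := boolP (v \in supp d); last by rewrite mulr0.
by move: (supp_indep u v uS vS); rewrite Euv.
Qed.

Lemma nonadjacency_classes_ge2 k (f : V -> 'I_k) :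
  {in supp d &, forall u v, (f u == f v) = ~~ adjacent E u v} ->
  (exists u v, E u v) -> (2 <= k)%N.
Proof.
move=> f_classes [a [b Eab]]; rewrite leqNgt; apply/negP => k_le1.
have supp_indep : {in supp d &, forall u v, ~~ E u v}.
  move=> u v uS vS; have : f u == f v.
    by apply/eqP/ord_inj; move: (ltn_ord (f u)) (ltn_ord (f v)); lia.
  by rewrite f_classes // /adjacent negb_or => /andP[].
have := edge_density_ge_quarter Eab; rewrite edge_density_eq0 //.
by rewrite leNgt invr_gt0 ltr0n.
Qed.

Section Oriented.
Hypothesis E_oriented : oriented E.

Lemma edge_density_grad_adjacent u :
  edge_density_grad u = \sum_(x | adjacent E u x) d x.
Proof.
rewrite /edge_density_grad edge_form_deltar edge_form_deltal.
rewrite (big_mkcond (E^~ u)) (big_mkcond (E u)) (big_mkcond (adjacent E u)) -big_split.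
apply: eq_bigr => x _; rewrite /adjacent.
case Exu: (E x u); case Eux: (E u x) => /=; rewrite ?addr0 ?add0r //.
by have := E_oriented.2 _ _ Exu; rewrite Eux.
Qed.

Lemma nonadjacent_trans u v w : u \in supp d -> v \in supp d -> w \in supp d ->
  ~~ adjacent E u v -> ~~ adjacent E v w -> ~~ adjacent E u w.
Proof.
rewrite !inE => du dv dw.
have [->//|uv] := eqVneq u v; have [<-//|vw] := eqVneq v w.
have [<-|uw] := eqVneq u w; first by rewrite /adjacent E_oriented.1.
rewrite /adjacent !negb_or => /andP[/negbTE Euv /negbTE Evu] /andP[/negbTE Evw /negbTE Ewv].
pose y := delta R u + delta R w - (delta R v + delta R v).
have sum_y0 : \sum_x y x = 0.
  by under eq_bigr do rewrite !ffunE; rewrite sumrB !big_split /= !sum_indicator; ring.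
have lin_y : edge_form E d y + edge_form E y d = 0.
  have := edge_density_grad_supp du dv; have := edge_density_grad_supp dw dv.
  rewrite /edge_density_grad !edge_formDr edge_formNr !edge_formDr.
  rewrite !edge_formDl edge_formNl !edge_formDl; lra.
have quad_y : edge_form E y y = (E u w)%:R + (E w u)%:R.
  rewrite !edge_formDl edge_formNl !edge_formDl !edge_formDr !edge_formNr !edge_formDr.
  by rewrite !edge_form_delta !E_oriented.1 Euv Evu Evw Ewv /=; ring.
have shift_ge0 x : 0 <= d x + d v / 2 * y x.
  have := d_ge0 x; rewrite /y !ffunE.
  by case: (eqVneq x v) => [->|_]; case: (_ == u); case: (_ == w) => /=; nra.
have := density_function_perturb sum_y0 shift_ge0; rewrite lin_y quad_y mulr0 add0r.
by case: (E u w); case: (E w u) => /=; nra.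
Qed.

Lemma nonadjacent_equiv : {in supp d & &, equivalence_rel (fun u v => ~~ adjacent E u v)}.
Proof.
have adjacent_sym u v : adjacent E u v = adjacent E v u by rewrite /adjacent orbC.
move=> u v w uS vS wS; split=> [|nadj_uv]; first by rewrite /adjacent E_oriented.1.
apply/idP/idP => [nadj_uw|]; last exact: nonadjacent_trans.
by apply: nonadjacent_trans vS uS wS _ nadj_uw; rewrite adjacent_sym.
Qed.

Lemma sum_nonadjacent u :
  \sum_(x in supp d | ~~ adjacent E u x) d x = 1 - edge_density_grad u.
Proof.
rewrite (sum_supp d_ge0) edge_density_grad_adjacent -d_sum1.
by rewrite [in RHS](bigID (adjacent E u)) /= addrC addrK.
Qed.

Lemma nonadjacency_class_weight k (f : V -> 'I_k) :
  (forall i, exists2 v, v \in supp d & f v = i) ->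
  {in supp d &, forall u v, (f u == f v) = ~~ adjacent E u v} ->
  forall i, \sum_(u in supp d | f u == i) d u = k%:R^-1.
Proof.
move=> f_onto f_classes i; have [v0 v0S] := supp_nonempty d_ge0 d_sum1.
pose c := 1 - edge_density_grad v0.
have class_c j : \sum_(u in supp d | f u == j) d u = c.
  have [u uS <-] := f_onto j.
  have [du dv0] : 0 < d u /\ 0 < d v0 by move: uS v0S; rewrite !inE.
  rewrite /c -(edge_density_grad_supp du dv0) -sum_nonadjacent; apply: eq_bigl => x.
  by case: (boolP (x \in supp d)) => //= xS; rewrite eq_sym f_classes.
have supp_mass : \sum_(x in supp d) d x = 1.
  by rewrite -d_sum1 -(sum_supp d_ge0 predT); apply: eq_bigl => x; rewrite andbT.
have kc1 : k%:R * c = 1.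
  rewrite -[RHS]supp_mass (partition_big f xpredT) //= (eq_bigr (fun=> c)) => [|j _].
    by rewrite sumr_const card_ord mulr_natl.
  exact: class_c.
have k_neq0 : k%:R != 0 :> R by rewrite pnatr_eq0 -lt0n (leq_ltn_trans _ (ltn_ord (f v0))).
by rewrite class_c; apply: (mulfI k_neq0); rewrite mulfV.
Qed.

End Oriented.
End DensityFunction.

Theorem lemma4p10 (R : realFieldType) (V : finType) (E : rel V)
    (d : V -> R) :
  oriented E ->
  (exists u v, E u v) ->
  density_function E d ->
  exists k : nat, exists f : V -> 'I_k,
    (2 <= k)%N /\
    orient_blowup_K E (supp d) f /\
    (forall i : 'I_k, \sum_(u in supp d | f u == i) d u = k%:R^-1).
Proof.
move=> E_oriented has_edge dmax.
have [v0 v0S] := supp_nonempty dmax.1.1 dmax.1.2.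
have [k [f [f_onto f_classes]]] :=
  equivalence_classes_ordinal v0S (nonadjacent_equiv dmax E_oriented).
exists k, f; split; first exact: (nonadjacency_classes_ge2 dmax f_classes has_edge).
split; first exact: orient_blowup_K_of_classes.
exact: (nonadjacency_class_weight dmax E_oriented f_onto f_classes).
Qed.
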